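(* Let $n\ge1$, $\mathbf{k}=(k_1,\dots,k_n)$ positive integers, $N=n+|\mathbf{k}|$, and $D\in\mathcal{D}_{\mathbf{k}}$. Then the sequence $\sigma(D)$ of indices written by the Walking Algorithm on $(T(D),R(D))$ has length $N$.
   Context: $|\mathbf{k}|=k_1+\cdots+k_n$. $\mathcal{D}_{\mathbf{k}}$: sequences $(a_1,\dots,a_N)$ whose positive entries are $k_1,\dots,k_n$ in order, other entries $-1$, all partial sums $a_1+\cdots+a_{i-1}\ge0$. SW-word: $S^{k_j}$ for up step $k_j$, $W$ for $-1$. Filling Algorithm producing $T(D)$: $n$ columns, column $i$ with $k_i+1$ cells in rows $1,\dots,k_i+1$; place $1$ at top of column 1; having placed $1,\dots,i-1$, the lowest filled entry of column $j$ is active if not in row $k_j+1$; if the $i$-th letter is $W$ place $i$ below the smallest active entry, otherwise at the top of the leftmost empty column; continue until $1,\dots,N$ placed. Entries of $T(D)$ are indices. Ranking Algorithm producing $R(D)$: ranks $0,\dots,k_1$ to column-1 indices top to bottom; for $i=2,\dots,n$, if the top index of column $i$ is $A+1$ and index $A$ has rank $a$, column $i$ gets ranks $a,\dots,a+k_i$ top to bottom. Among boxes of equal rank, the largest is the one with largest index. Walking Algorithm: go to the largest rank-$0$ box, mark it, write its index. Repeat: if the current box is in row 1 of column $i$, let $r$ be the rank of the bottom box (row $k_i+1$) of column $i$; otherwise let $r$ be the rank of the box directly above. If an unmarked box of rank $r$ exists, go to the unmarked rank-$r$ box with largest index, mark it and write its index; otherwise stop. $\sigma(D)$ is the sequence of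 written indices. *)

From mathcomp Require Import all_boot all_order all_algebra.
Set Implicit Arguments. Unset Strict Implicit. Unset Printing Implicit Defensive.
Import GRing.Theory Num.Theory.

(* The set D_k.  A sequence a = (a_1,...,a_N) (stored 0-based as a seq  *)
(* int) whose positive entries are k_1,...,k_n in order, whose other   *)
(* entries are -1, and all of whose partial sums a_1+...+a_{i-1}       *)
(* (i = 1..N) are >= 0.                                                *)
Definition in_Dk (k : seq nat) (a : seq int) : Prop :=
  [/\ [seq x <- a | (0 < x)%R] = [seq (Posz j) | j <- k],
      all (fun x : int => (0 < x)%R || (x == (-1)%R)) a &
      forall i, i < size a -> (0 <= \sum_(j < i) a`_j)%R].

(* i-th letter (1-based) of the SW-word is W iff a_i = -1. *)
Definition letterW (a : seq int) (i : nat) : bool := nth 0%R a i.-1 == (-1)%R.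

(* Filling Algorithm.  The tableau is a list of n columns; column j    *)
(* (0-based) is the list of its indices from top (row 1) to bottom;    *)
(* it has k_j + 1 cells.                                               *)
Definition colcap (k : seq nat) (j : nat) : nat := (nth 0 k j).+1.
Definition lowest (c : seq nat) : nat := last 0 c.

Definition is_active (k : seq nat) (cols : seq (seq nat)) (j : nat) : bool :=
  (0 < size (nth [::] cols j)) && (size (nth [::] cols j) != colcap k j).

(* place index i below the smallest active entry *)
Definition place_W (k : seq nat) (cols : seq (seq nat)) (i : nat) :=
  match [seq j <- iota 0 (size k) | is_active k cols j] with
  | [::] => cols
  | j0 :: js =>
      let j := foldl (fun b j => if lowest (nth [::] cols j) < lowest (nth [::] cols b)
                                 then j else b) j0 js in
      set_nth [::] cols j (rcons (nth [::] cols j) i)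
  end.

Definition place_S (cols : seq (seq nat)) (i : nat) :=
  let j := find (fun c => c == [::]) cols in
  if j < size cols then set_nth [::] cols j [:: i] else cols.

Definition fill_step (k : seq nat) (a : seq int) (cols : seq (seq nat)) (i : nat) :=
  if letterW a i then place_W k cols i else place_S cols i.

Definition fillT (k : seq nat) (a : seq int) : seq (seq nat) :=
  foldl (fill_step k a) (set_nth [::] (nseq (size k) [::]) 0 [:: 1])
        (iota 2 (size a).-1).

(* Ranking Algorithm.  rankf cols m gives the ranks of the indices in  *)
(* the first m columns.                                                *)
Fixpoint rankf (cols : seq (seq nat)) (m : nat) : nat -> nat :=
  match m with
  | 0 => fun _ => 0
  | m'.+1 =>
      let r := rankf cols m' in
      let c := nth [::] cols m' in
      let b := if m' == 0 then 0 else r (head 0 c).-1 in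
      fun x => if x \in c then b + index x c else r x
  end.

Definition rankR (cols : seq (seq nat)) : nat -> nat := rankf cols (size cols).

(* indices.                                                            *)
Definition colof (cols : seq (seq nat)) (x : nat) : nat := find (fun c => x \in c) cols.

Definition next_rank (k : seq nat) (cols : seq (seq nat)) (x : nat) : nat :=
  let j := colof cols x in
  let c := nth [::] cols j in
  let ix := index x c in
  if ix == 0 then rankR cols (nth 0 c (nth 0 k j))  (* bottom box, row k_j+1 *)
  else rankR cols (nth 0 c ix.-1).                  (* box directly above *)

Definition pick_box (cols : seq (seq nat)) (r : nat) (marked : seq nat) : option nat :=
  match [seq y <- flatten cols | (rankR cols y == r) && (y \notin marked)] with
  | [::] => None
  | c => Some (foldr maxn 0 c)
  end.

Fixpoint walk (k : seq nat) (cols : seq (seq nat)) (fuel x : nat) (acc : seq nat) :=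
  match fuel with
  | 0 => acc
  | f.+1 =>
      match pick_box cols (next_rank k cols x) acc with
      | None => acc
      | Some y => walk k cols f y (rcons acc y)
      end
  end.

(* sigma on a tableau/ranking; fuel = number of boxes suffices since   *)
(* each step marks a new box *)
Definition walking (k : seq nat) (cols : seq (seq nat)) : seq nat :=
  match pick_box cols 0 [::] with
  | None => [::]
  | Some x0 => walk k cols (size (flatten cols)) x0 [:: x0]
  end.

Definition sigmaD (k : seq nat) (a : seq int) : seq nat := walking k (fillT k a).

From mathcomp Require Import all_boot all_order all_algebra.
From mathcomp Require Import zify.
Set Implicit Arguments. Unset Strict Implicit. Unset Printing Implicit Defensive.

(* Filling: every W finds an active column, because the free cells of the
   started columns always number the current height of the path a; at the
   end the path is back at height 0, so all n columns are full and hold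
   1, ..., N, and the top entry of every column j > 0 is one more than an
   entry of an earlier column.

   Walking: regard box x as an edge from its rank to the rank it asks for
   next.  A column with base rank b has ranks b, ..., b + k_j and asks for
   b + k_j, b, ..., b + k_j - 1, so each rank is as often a source as a
   target.  The walk is a trail starting at rank 0 that always takes the
   largest unmarked box of the requested rank.  By this balance it can only
   stop when it asks for rank 0 and every rank is balanced among the marked
   boxes; since the smallest box of each positive rank r asks for r - 1 (a
   column top shares its rank with a smaller box), induction on r shows
   that every box is marked. *)

Lemma foldr_maxn_mem (s : seq nat) : s != [::] -> foldr maxn 0 s \in s.
Proof.
elim: s => // x s IH _; case: s IH => [|y s] IH; first by rewrite /= maxn0 mem_seq1.
rewrite /= in_cons; have /= := IH isT; set m := maxn y _ => ms.
by case: (leqP m x); rewrite ?eqxx ?ms ?orbT.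
Qed.

Lemma leq_foldr_maxn (s : seq nat) x : x \in s -> x <= foldr maxn 0 s.
Proof. by move=> xs; rewrite foldrE; exact: (leq_bigmax_seq x). Qed.

Lemma leq_count_uniq (T : eqType) (P : pred T) (s1 s2 : seq T) :
  uniq s1 -> {in s1, forall z, P z -> z \in s2} -> count P s1 <= count P s2.
Proof.
move=> u12 s12; rewrite -!size_filter; apply: uniq_leq_size; first exact: filter_uniq.
by move=> z; rewrite !mem_filter => /andP[Pz zs1]; rewrite Pz (s12 z zs1 Pz).
Qed.

Lemma ltn_count_uniq (T : eqType) (P : pred T) (s1 s2 : seq T) z :
  uniq s1 -> {in s1, forall z, P z -> z \in s2} -> z \in s2 -> z \notin s1 -> P z ->
  count P s1 < count P s2.
Proof.
move=> u1 s12 z2 z1 Pz; have: count P (z :: s1) <= count P s2.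
  by apply: leq_count_uniq => [|y]; rewrite /= ?z1 // in_cons => /predU1P[->|/s12].
by rewrite /= Pz.
Qed.

Section GreedyWalk.
Variables (F : seq nat) (rk nr : nat -> nat).

Definition greedy_pick (r : nat) (marked : seq nat) : option nat :=
  match [seq y <- F | (rk y == r) && (y \notin marked)] with
  | [::] => None
  | c => Some (foldr maxn 0 c)
  end.

Fixpoint greedy_walk (fuel x : nat) (marked : seq nat) : seq nat :=
  match fuel with
  | 0 => marked
  | f.+1 =>
      match greedy_pick (nr x) marked with
      | None => marked
      | Some y => greedy_walk f y (rcons marked y)
      end
  end.

Definition greedy_walking : seq nat :=
  match greedy_pick 0 [::] with
  | None => [::]
  | Some x0 => greedy_walk (size F) x0 [:: x0]
  end.

Variant greedy_pick_spec (r : nat) (marked : seq nat) : option nat -> Prop :=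
  | GreedyPickSome y of y \in F & rk y = r & y \notin marked
      & (forall z, z \in F -> rk z = r -> z \notin marked -> z <= y) :
      greedy_pick_spec r marked (Some y)
  | GreedyPickNone of (forall z, z \in F -> rk z = r -> z \in marked) :
      greedy_pick_spec r marked None.

Lemma greedy_pickP r marked : greedy_pick_spec r marked (greedy_pick r marked).
Proof.
rewrite /greedy_pick; set c := [seq _ <- _ | _].
have memc z : (z \in c) = [&& z \in F, rk z == r & z \notin marked].
  by rewrite mem_filter andbC.
case Ec: c => [|y c']; last first.
  rewrite -Ec; have /foldr_maxn_mem : c != [::] by rewrite Ec.
  rewrite memc => /and3P[Fy /eqP ry ny]; constructor=> // z Fz rz nz.
  by apply: leq_foldr_maxn; rewrite memc Fz rz eqxx.
constructor=> z Fz rz; apply: contraT => nz.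
by have := memc z; rewrite Ec Fz rz eqxx nz.
Qed.

(* Along a walk x_0, ..., x_m = x the ranks are rk x_0 = 0 and
   rk x_(i+1) = nr x_i, whence the flow identity; the last condition says
   that, within a rank class, the marked boxes are the largest ones. *)
Definition walk_inv (marked : seq nat) (x : nat) :=
  [/\ uniq marked, {subset marked <= F},
      forall r, count (fun y => rk y == r) marked + (nr x == r)
                = (r == 0) + count (fun y => nr y == r) marked &
      forall y z, y \in marked -> z \in F -> rk z = rk y -> y < z -> z \in marked].

Lemma walk_inv_start x0 : x0 \in F -> rk x0 = 0 ->
  (forall z, z \in F -> rk z = 0 -> z <= x0) -> walk_inv [:: x0] x0.
Proof.
move=> Fx0 rx0 maxx0; split=> //.
- by move=> z; rewrite mem_seq1 => /eqP->.
- by move=> r /=; rewrite rx0 eq_sym; case: (r == 0); case: (nr x0 == r).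
- move=> y z; rewrite mem_seq1 => /eqP-> Fz rz.
  by rewrite ltnNge maxx0 // rz rx0.
Qed.

Lemma walk_inv_rcons marked x y : walk_inv marked x ->
  greedy_pick (nr x) marked = Some y -> walk_inv (rcons marked y) y.
Proof.
move=> [um subF flow upper]; case: greedy_pickP => // {}y Fy ry ny maxy [<-].
split.
- by rewrite rcons_uniq ny um.
- by move=> z; rewrite mem_rcons in_cons => /predU1P[->|/subF].
- by move=> r; rewrite -!cats1 !count_cat /= ry; have := flow r; lia.
move=> y' z; rewrite !mem_rcons !in_cons => /predU1P[->|y'm] Fz rz lt_y'z.
  apply/orP; right; apply: contraT => nz.
  by have := maxy z Fz (etrans rz ry) nz; rewrite leqNgt lt_y'z.
by rewrite (upper y' z) ?orbT.
Qed.

Lemma greedy_walk_stuck fuel x marked :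
  walk_inv marked x -> size marked + fuel = (size F).+1 ->
  exists2 x', walk_inv (greedy_walk fuel x marked) x' &
    forall z, z \in F -> rk z = nr x' -> z \in greedy_walk fuel x marked.
Proof.
elim: fuel x marked => [|f IH] x marked inv hsize /=.
  by case: inv => um subF _ _; have := uniq_leq_size um subF; rewrite -ltnS -hsize addn0 ltnn.
case E: (greedy_pick (nr x) marked) => [y|].
  apply: IH; first exact: walk_inv_rcons E.
  by rewrite size_rcons; lia.
by exists x => //; move: E; case: greedy_pickP.
Qed.

Hypothesis uniq_F : uniq F.
Hypothesis rank_balance :
  forall r, count (fun y => rk y == r) F = count (fun y => nr y == r) F.
Hypothesis min_rank_descent : forall x, x \in F -> 0 < rk x ->
  (forall y, y \in F -> rk y = rk x -> x <= y) -> nr x = (rk x).-1.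

Section Stuck.
Variables (marked : seq nat) (x : nat).
Hypothesis inv : walk_inv marked x.
Hypothesis stuck : forall z, z \in F -> rk z = nr x -> z \in marked.

Lemma stuck_next_rank0 : nr x = 0.
Proof.
case: inv => um subF flow _; apply: contraTeq isT => nx0.
set r := nr x in nx0 *.
have := flow r; rewrite eqxx (negbTE nx0) /=.
have : count (fun y => rk y == r) F <= count (fun y => rk y == r) marked.
  by apply: leq_count_uniq => // z Fz /eqP/(stuck Fz).
have : count (fun y => nr y == r) marked <= count (fun y => nr y == r) F.
  by apply: leq_count_uniq => // z /subF.
have := rank_balance r; lia.
Qed.

Lemma stuck_marks_all : {subset F <= marked}.
Proof.
case: inv => um subF flow upper.
have balanced r : count (fun y => rk y == r) marked = count (fun y => nr y == r) marked.
  by have := flow r; rewrite stuck_next_rank0; case: r => //=; lia.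
suff marks_rank r z : z \in F -> rk z = r -> z \in marked by move=> z /marks_rank; apply.
elim: r z => [|r IHr] z Fz rz; first by apply: stuck; rewrite // rz stuck_next_rank0.
(* The least box e of rank r.+1 asks for rank r; if it were unmarked, the
   marked boxes would ask for r less often than F does, yet they contain
   every box of rank r. *)
apply: contraT => nz.
have exr : exists y, (y \in F) && (rk y == r.+1) by exists z; rewrite Fz rz eqxx.
case: (ex_minnP exr) => e /andP[Fe /eqP re] mine.
have minF y : y \in F -> rk y = rk e -> e <= y by move=> Fy ry; apply: mine; rewrite Fy ry re eqxx.
have ne : e \notin marked.
  apply: contra nz => me; case: (ltngtP e z) => [lt_ez||<- //].
    by apply: upper me Fz _ lt_ez; rewrite rz re.
  by rewrite ltnNge minF // rz re.
have nre : nr e = r by rewrite (min_rank_descent Fe _ minF) re.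
have : count (fun y => nr y == r) marked < count (fun y => nr y == r) F.
  by apply: (ltn_count_uniq _ _ Fe ne) => // [y /subF|]; rewrite ?nre.
have : count (fun y => rk y == r) F <= count (fun y => rk y == r) marked.
  by apply: leq_count_uniq => // y Fy /eqP/(IHr y Fy).
have := balanced r; have := rank_balance r; lia.
Qed.

End Stuck.

Lemma size_greedy_walking :
  (exists2 x, x \in F & rk x = 0) -> size greedy_walking = size F.
Proof.
move=> [x Fx rx]; rewrite /greedy_walking.
case: greedy_pickP => [x0 Fx0 rx0 _ maxx0|/(_ x Fx rx) //].
have [|x' inv stuck] := @greedy_walk_stuck (size F) x0 [:: x0] _ erefl.
  by apply: walk_inv_start => // z Fz rz; apply: maxx0.
case: (inv) => um subF _ _; apply/eqP; rewrite eqn_leq uniq_leq_size //=.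
exact: uniq_leq_size (stuck_marks_all inv stuck).
Qed.

End GreedyWalk.

Lemma walkE k cols fuel x marked :
  walk k cols fuel x marked =
  greedy_walk (flatten cols) (rankR cols) (next_rank k cols) fuel x marked.
Proof.
elim: fuel x marked => //= f IH x marked.
by rewrite /pick_box /greedy_pick; case: filter => // *; rewrite IH.
Qed.

Lemma walkingE k cols :
  walking k cols = greedy_walking (flatten cols) (rankR cols) (next_rank k cols).
Proof.
by rewrite /walking /greedy_walking /pick_box /greedy_pick; case: filter => // *; rewrite walkE.
Qed.

Section Columns.
Variables (T : eqType) (C : seq (seq T)).

Lemma mem_nth_col_lt x j : x \in nth [::] C j -> j < size C.
Proof. by case: (ltnP j (size C)) => // le; rewrite nth_default. Qed.

Lemma mem_nth_flatten x j : x \in nth [::] C j -> x \in flatten C.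
Proof.
move=> xj; apply/flattenP; exists (nth [::] C j) => //.
exact/mem_nth/(mem_nth_col_lt xj).
Qed.

Lemma flatten_nthP x : x \in flatten C -> exists2 j, j < size C & x \in nth [::] C j.
Proof. by case/flattenP=> c /(nthP [::])[j lt_j <-]; exists j. Qed.

End Columns.

Section UniqColumns.
Variables (T : eqType) (C : seq (seq T)).
Hypothesis uniq_C : uniq (flatten C).

Lemma uniq_nth_col j : uniq (nth [::] C j).
Proof.
elim: C j uniq_C => [|c C' IH] [|j] //=; rewrite cat_uniq => /and3P[] //.
by move=> _ _ /IH.
Qed.

Lemma find_mem_nth_col x j : x \in nth [::] C j -> find (fun c => x \in c) C = j.
Proof.
elim: C j uniq_C => [|c C' IH] [|j] //= + xj; rewrite ?xj // cat_uniq => /and3P[_ dis u'].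
have -> : x \in c = false.
  by apply: contraNF dis => xc; apply/hasP; exists x => //; apply: mem_nth_flatten xj.
by rewrite (IH j u' xj).
Qed.

Lemma mem_nth_col_inj x j j' : x \in nth [::] C j -> x \in nth [::] C j' -> j = j'.
Proof. by move=> /find_mem_nth_col <- /find_mem_nth_col <-. Qed.

End UniqColumns.

Section TableauRanks.
Variables (k : seq nat) (C : seq (seq nat)).
Hypothesis uniq_C : uniq (flatten C).
Hypothesis size_col : forall j, j < size C -> size (nth [::] C j) = (nth 0 k j).+1.
Hypothesis head_pred_col : forall j, 0 < j < size C ->
  exists2 j', j' < j & (head 0 (nth [::] C j)).-1 \in nth [::] C j'.
Hypothesis C_gt0 : forall x, x \in flatten C -> 0 < x.
Hypothesis C_neq0 : 0 < size C.

Definition col_base j := if j == 0 then 0 else rankf C j (head 0 (nth [::] C j)).-1.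

Lemma rankf_col y j m : y \in nth [::] C j -> j < m -> rankf C m y = rankf C j.+1 y.
Proof.
move=> yj; elim: m => // m IH; rewrite ltnS leq_eqVlt => /predU1P[->//|lt_jm] /=.
rewrite ifN ?IH //; apply: contraTN lt_jm => /(mem_nth_col_inj uniq_C yj) ->.
by rewrite ltnn.
Qed.

Lemma rankR_col x j : x \in nth [::] C j -> rankR C x = col_base j + index x (nth [::] C j).
Proof. by move=> xj; rewrite /rankR (rankf_col xj (mem_nth_col_lt xj)) /= xj. Qed.

Lemma rankR_nth_col j i : j < size C -> i <= nth 0 k j ->
  rankR C (nth 0 (nth [::] C j) i) = col_base j + i.
Proof.
move=> lt_j le_i; have lt_i : i < size (nth [::] C j) by rewrite size_col.
by rewrite (rankR_col (mem_nth 0 lt_i)) index_uniq // uniq_nth_col.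
Qed.

Lemma next_rank_col x j : x \in nth [::] C j -> next_rank k C x =
  col_base j + (if index x (nth [::] C j) == 0 then nth 0 k j
                else (index x (nth [::] C j)).-1).
Proof.
move=> xj; have lt_j := mem_nth_col_lt xj.
have lt_x : index x (nth [::] C j) <= nth 0 k j by rewrite -ltnS -size_col // index_mem.
rewrite /next_rank /colof (find_mem_nth_col uniq_C xj).
by case: eqP => _; rewrite rankR_nth_col // (leq_trans (leq_pred _)).
Qed.

(* The ranks of column j are b, b+1, ..., b+K and its next ranks are
   b+K, b, ..., b+K-1. *)
Lemma count_rank_col j r : j < size C ->
  count (fun y => rankR C y == r) (nth [::] C j) =
  count (fun y => next_rank k C y == r) (nth [::] C j).
Proof.
move=> lt_j; set K := nth 0 k j; set b := col_base j.
have nrE i : i <= K -> next_rank k C (nth 0 (nth [::] C j) i) = b + if i == 0 then K else i.-1.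
  move=> le_iK; have lt_i : i < size (nth [::] C j) by rewrite size_col.
  by rewrite (next_rank_col (mem_nth 0 lt_i)) index_uniq // uniq_nth_col.
have iota_rcons : iota 0 K.+1 = rcons (iota 0 K) K by rewrite -cats1 -addn1 iotaD.
have iota_cons : iota 0 K.+1 = 0 :: map succn (iota 0 K) by rewrite /= -(iotaDl 1 0).
rewrite -(mkseq_nth 0 (nth [::] C j)) /mkseq size_col // !count_map -/K.
rewrite {1}iota_rcons iota_cons -cats1 count_cat /= count_map.
rewrite rankR_nth_col // nrE // addn0 addnC; congr (_ + _); apply: eq_in_count => i.
by rewrite mem_iota /= => lt_iK; rewrite rankR_nth_col ?nrE // ltnW.
Qed.

Lemma count_rank_next_rank r :
  count (fun y => rankR C y == r) (flatten C) =
  count (fun y => next_rank k C y == r) (flatten C).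
Proof.
rewrite !count_flatten; congr sumn; apply/eq_in_map => c /(nthP [::])[j lt_j <-].
exact: count_rank_col.
Qed.

(* If x is the top of a column j > 0, its rank is that of x - 1, which sits
   in an earlier column; so x is not the smallest box of its rank. *)
Lemma next_rank_min x : x \in flatten C -> 0 < rankR C x ->
  (forall y, y \in flatten C -> rankR C y = rankR C x -> x <= y) ->
  next_rank k C x = (rankR C x).-1.
Proof.
move=> /flatten_nthP[j lt_j xj]; rewrite (next_rank_col xj) (rankR_col xj).
case: eqP => [top|]; last by lia.
rewrite top addn0 => base_gt0 minx; exfalso.
have j_gt0 : 0 < j by case: j {xj lt_j minx} base_gt0 top.
have xtop : head 0 (nth [::] C j) = x by rewrite -nth0 -top nth_index.
have [j' lt_j'j yj'] : exists2 j', j' < j & x.-1 \in nth [::] C j'.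
  by rewrite -xtop; apply: head_pred_col; rewrite j_gt0.
have : x <= x.-1.
  apply: minx; first exact: mem_nth_flatten yj'.
  rewrite /rankR (rankf_col yj' (ltn_trans lt_j'j lt_j)).
  by rewrite -(rankf_col yj' lt_j'j) /col_base (gtn_eqF j_gt0) xtop.
by have := C_gt0 (mem_nth_flatten xj); lia.
Qed.

Lemma rankR_eq0 : exists2 x, x \in flatten C & rankR C x = 0.
Proof.
have lt0 : 0 < size (nth [::] C 0) by rewrite size_col.
exists (nth 0 (nth [::] C 0) 0); first exact: mem_nth_flatten (mem_nth 0 lt0).
by rewrite rankR_nth_col.
Qed.

Lemma size_walking : size (walking k C) = size (flatten C).
Proof.
rewrite walkingE size_greedy_walking //.
- exact: count_rank_next_rank.
- exact: next_rank_min.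
- exact: rankR_eq0.
Qed.

End TableauRanks.

Lemma foldl_select_mem (T : eqType) (better : T -> T -> bool) (j0 : T) js :
  foldl (fun b j => if better b j then j else b) j0 js \in j0 :: js.
Proof.
elim: js j0 => [|j js IH] j0 /=; first by rewrite mem_seq1.
by case: ifP => _; [move: (IH j) | move: (IH j0)]; rewrite !in_cons => /predU1P[->|->];
  rewrite ?eqxx ?orbT.
Qed.

Lemma find_first (T : Type) (P : pred T) (s : seq T) x0 j :
  j < size s -> P (nth x0 s j) -> (forall j', j' < j -> ~~ P (nth x0 s j')) ->
  find P s = j.
Proof.
elim: s j => [|x s IH] [|j] //= lt_j Pj before; first by rewrite Pj.
by rewrite (negbTE (before 0 isT)) (IH j) // => j' lt_j'; apply: (before j'.+1).
Qed.

Lemma perm_flatten_append (T : eqType) (cols : seq (seq T)) j x : j < size cols ->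
  perm_eq (flatten (set_nth [::] cols j (rcons (nth [::] cols j) x))) (rcons (flatten cols) x).
Proof.
elim: cols j => [|c cols IH] [|j] //= lt_j.
  by rewrite -!cats1 -!catA perm_cat2l perm_catC.
by rewrite rcons_cat perm_cat2l IH.
Qed.

Lemma place_W_active k cols x j : j < size k -> is_active k cols j ->
  exists2 j1, j1 < size k & is_active k cols j1 /\
    place_W k cols x = set_nth [::] cols j1 (rcons (nth [::] cols j1) x).
Proof.
move=> lt_j act_j; rewrite /place_W.
have : j \in [seq j <- iota 0 (size k) | is_active k cols j] by rewrite mem_filter act_j mem_iota.
case E: filter => [|j0 js] // _; set j1 := foldl _ j0 js.
have : j1 \in j0 :: js by apply: foldl_select_mem.
by rewrite -E mem_filter mem_iota => /andP[act1 /andP[_ lt1]]; exists j1.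
Qed.

Lemma place_S_first_empty cols x j : j < size cols -> nth [::] cols j = [::] ->
  (forall j', j' < j -> nth [::] cols j' != [::]) -> place_S cols x = set_nth [::] cols j [:: x].
Proof.
by move=> lt_j empty_j before; rewrite /place_S (@find_first _ _ _ [::] j) ?lt_j ?empty_j.
Qed.

Lemma mem_nth_append (T : eqType) (cols : seq (seq T)) j x y j' :
  y \in nth [::] cols j' -> y \in nth [::] (set_nth [::] cols j (rcons (nth [::] cols j) x)) j'.
Proof. by rewrite nth_set_nth /=; case: eqP => [->|//]; rewrite mem_rcons in_cons orbC => ->. Qed.

Lemma sum_Posz (s : seq nat) : (\sum_(x <- map Posz s) x)%R = Posz (sumn s).
Proof. by elim: s => [|x s IH]; rewrite ?big_nil // big_cons IH PoszD. Qed.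

Lemma sum_pos_or_m1 (s : seq int) : all (fun x : int => (0 < x)%R || (x == -1)%R) s ->
  (\sum_(x <- s) x)%R =
  (\sum_(x <- [seq x <- s | (0 < x)%R]) x - Posz (count (predC (fun x : int => (0 < x)%R)) s))%R.
Proof.
elim: s => [|x s IH] /=; first by rewrite !big_nil.
case/andP=> x_pm1 /IH {}IH; rewrite big_cons IH.
case: (boolP (0 < x)%R) => x_gt0 /=; first by rewrite big_cons; lia.
by move: x_pm1; rewrite (negbTE x_gt0) => /eqP ->; lia.
Qed.

Section FillingWord.
Variables (k : seq nat) (a : seq int).
Hypothesis size_a : size a = size k + sumn k.
Hypothesis a_Dk : in_Dk k a.

Local Notation n := (size k).
Local Notation N := (size a).

Definition s_count i := count (fun x : int => (0 < x)%R) (take i a).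

Lemma filter_pos_a : [seq x <- a | (0 < x)%R] = map Posz k.
Proof. by case: a_Dk. Qed.

Lemma a_pos_or_m1 t : t < N -> (0 < a`_t)%R || (a`_t == -1)%R.
Proof. by case: a_Dk => _ /all_nthP + _; apply. Qed.

Lemma prefix_sum_ge0 i : i < N -> (0 <= \sum_(t < i) a`_t)%R.
Proof. by case: a_Dk => _ _; apply. Qed.

Lemma s_count0 : s_count 0 = 0.
Proof. by rewrite /s_count take0. Qed.

Lemma s_countS t : t < N -> s_count t.+1 = s_count t + (0 < a`_t)%R.
Proof. by move=> lt_t; rewrite /s_count (take_nth 0%R lt_t) -cats1 count_cat /= addn0. Qed.

Lemma s_count_size : s_count N = n.
Proof. by rewrite /s_count take_size -size_filter filter_pos_a size_map. Qed.

Lemma s_count_le t : s_count t <= t.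
Proof. by rewrite /s_count (leq_trans (count_size _ _)) // size_take_min geq_minl. Qed.

Lemma pos_entry t : t < N -> (0 < a`_t)%R ->
  (a`_t)%R = Posz (nth 0 k (s_count t)) /\ s_count t < n.
Proof.
move=> lt_t a_gt0.
have split_a : [seq x <- a | (0 < x)%R] =
    [seq x <- take t a | (0 < x)%R] ++ (a`_t)%R :: [seq x <- drop t.+1 a | (0 < x)%R].
  by rewrite -{1}(cat_take_drop t a) (drop_nth 0%R lt_t) filter_cat /= a_gt0.
have size_pre : size [seq x <- take t a | (0 < x)%R] = s_count t by rewrite size_filter.
have lt_n : s_count t < n.
  by have := congr1 size split_a; rewrite filter_pos_a size_map size_cat /= size_pre => ->; lia.
split=> //; have := congr1 (fun s => nth 0%R s (s_count t)) split_a.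
by rewrite /= filter_pos_a nth_cat size_pre ltnn subnn (nth_map 0).
Qed.

Lemma sum_a_eq0 : (\sum_(t < N) a`_t)%R = 0%R.
Proof.
rewrite -(big_mkord xpredT (fun t => a`_t)%R) -(big_nth 0%R xpredT id).
rewrite sum_pos_or_m1; last by case: a_Dk.
rewrite filter_pos_a sum_Posz.
have := count_predC (fun x : int => (0 < x)%R) a.
rewrite -[count _ a]size_filter filter_pos_a size_map size_a => /eqP.
by rewrite eqn_add2l => /eqP ->; lia.
Qed.

Lemma prefix_sum_gt0 i : i < N -> (a`_i = -1)%R -> (0 < \sum_(t < i) a`_t)%R.
Proof.
move=> lt_i a_m1.
have sumS : (\sum_(t < i.+1) a`_t = \sum_(t < i) a`_t - 1)%R by rewrite big_ord_recr /= a_m1.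
case: (ltnP i.+1 N) => [/prefix_sum_ge0|le_N]; first by rewrite sumS; lia.
have eq_N : i.+1 = N by apply/eqP; rewrite eqn_leq lt_i.
by move: sum_a_eq0; rewrite -eq_N sumS; lia.
Qed.

Lemma k_gt0 j : j < n -> 0 < nth 0 k j.
Proof.
move=> lt_j; have : Posz (nth 0 k j) \in [seq x <- a | (0 < x)%R].
  by rewrite filter_pos_a map_f // mem_nth.
by rewrite mem_filter => /andP[].
Qed.

Definition col_room (cols : seq (seq nat)) j :=
  if nth [::] cols j == [::] then 0 else colcap k j - size (nth [::] cols j).

Definition room (cols : seq (seq nat)) := \sum_(j < n) col_room cols j.

Lemma room_append cols j x : j < n -> size (nth [::] cols j) < colcap k j ->
  Posz (room (set_nth [::] cols j (rcons (nth [::] cols j) x))) =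
  (Posz (room cols) + if nth [::] cols j == [::] then Posz (nth 0%N k j) else -1)%R.
Proof.
move=> lt_j lt_cap; rewrite /room (bigD1 (Ordinal lt_j)) //=.
rewrite [X in (Posz X + _)%R](bigD1 (Ordinal lt_j)) //=.
rewrite (eq_bigr (fun j' : 'I_n => col_room cols j')) => [|j' ne_j'j]; last first.
  have ne : (nat_of_ord j' == j) = false.
    by apply: contraNF ne_j'j => /eqP eq_j'j; apply/eqP/val_inj.
  by rewrite /col_room nth_set_nth /= ne.
rewrite {1}/col_room nth_set_nth /= eqxx size_rcons.
rewrite /col_room /colcap in lt_cap *.
by case: (nth [::] cols j) lt_cap => [|y c] /=; rewrite ?size_rcons; lia.
Qed.

(* The last field: the free cells of the started columns count the height of
   the path a after i steps. *)
Record fill_inv (i : nat) (cols : seq (seq nat)) : Prop := FillInv {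
  size_fill : size cols = n;
  empty_fill : forall j, j < n -> (nth [::] cols j == [::]) = (s_count i <= j);
  perm_fill : perm_eq (flatten cols) (iota 1 i);
  cap_fill : forall j, j < n -> size (nth [::] cols j) <= colcap k j;
  head_fill : forall j, 0 < j < n -> nth [::] cols j != [::] ->
    exists2 j', j' < j & (head 0 (nth [::] cols j)).-1 \in nth [::] cols j';
  room_fill : Posz (room cols) = (\sum_(t < i) a`_t)%R }.

Section Append.
Variables (i : nat) (cols : seq (seq nat)) (j : nat).
Hypothesis lt_i : i < N.
Hypothesis inv : fill_inv i cols.
Hypothesis lt_j : j < n.
Hypothesis le_j : j <= s_count i.

Local Notation c := (nth [::] cols j).
Local Notation cols' := (set_nth [::] cols j (rcons c i.+1)).

Lemma start_col : c == [::] -> j = s_count i.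
Proof. by rewrite (empty_fill inv) // => ge_j; apply/eqP; rewrite eqn_leq le_j. Qed.

Lemma head_fill_append j' : 0 < j' < n -> nth [::] cols' j' != [::] ->
  exists2 j'', j'' < j' & (head 0 (nth [::] cols' j')).-1 \in nth [::] cols' j''.
Proof.
rewrite nth_set_nth /=; case: (eqVneq j' j) => [-> range _|_ range nonempty]; last first.
  by have [j'' lt_j'' h] := head_fill inv range nonempty; exists j'' => //; apply: mem_nth_append.
case: (boolP (c == [::])) => [c0|nonempty]; last first.
  have [j'' lt_j'' h] := head_fill inv range nonempty.
  have -> : head 0 (rcons c i.+1) = head 0 c by case: (nth [::] cols j) nonempty.
  by exists j'' => //; apply: mem_nth_append.
have eq_j := start_col c0; have -> : head 0 (rcons c i.+1) = i.+1 by rewrite (eqP c0).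
have : i \in flatten cols.
  rewrite (perm_mem (perm_fill inv)) mem_iota add1n ltnSn andbT.
  by move: (s_count_le i) range; rewrite -eq_j; lia.
case/flatten_nthP=> j'' lt_j'' ij''; exists j''; last exact: mem_nth_append.
rewrite eq_j ltnNge -(empty_fill inv) -?(size_fill inv) //.
by apply: contraL ij'' => /eqP ->.
Qed.

Lemma fill_inv_append : size c < colcap k j ->
  (a`_i = if c == [::] then Posz (nth 0%N k j) else -1)%R -> fill_inv i.+1 cols'.
Proof.
move=> lt_cap a_i; case: (inv) => size_c empty_c perm_c cap_c _ room_c.
have cnt : s_count i.+1 = s_count i + (c == [::]).
  by rewrite s_countS // a_i; case: (c == [::]); rewrite //= ltz_nat k_gt0.
have nonempty' : (rcons c i.+1 == [::]) = false by case: (nth [::] cols j).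
split.
- by rewrite size_set_nth size_c; apply/maxn_idPr.
- move=> j' lt_j'; rewrite nth_set_nth /= cnt; case: (eqVneq j' j) => [->|ne].
    rewrite nonempty'; case: (boolP (c == [::])) => [/start_col <-|]; first by lia.
    by rewrite empty_c //= addn0 => /negbTE ->.
  rewrite (empty_c j') //; case: (boolP (c == [::])) => [/start_col eq_j|].
    by move: ne; rewrite eq_j; lia.
  by rewrite /= addn0.
- have iota_rcons : iota 1 i.+1 = rcons (iota 1 i) i.+1.
    by rewrite -cats1 -(addn1 i) iotaD add1n addn1.
  have lt_j_cols : j < size cols by rewrite size_c.
  apply: perm_trans (perm_flatten_append i.+1 lt_j_cols) _.
  by rewrite iota_rcons -!cats1 perm_cat2r.
- move=> j' lt_j'; rewrite nth_set_nth /=; case: eqP => [->|_]; last exact: cap_c.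
  by rewrite size_rcons.
- exact: head_fill_append.
- by rewrite room_append // room_c big_ord_recr /= a_i.
Qed.

End Append.

Lemma room_gt0_active cols : 0 < room cols -> exists2 j, j < n & is_active k cols j.
Proof.
case: (boolP [exists j : 'I_n, 0 < col_room cols j]) => [/existsP[j room_j] _|/existsPn none].
  have nonempty : nth [::] cols j != [::] by move: room_j; rewrite /col_room; case: ifP.
  exists j => //; rewrite /is_active lt0n size_eq0 nonempty /=.
  by move: room_j; rewrite /col_room (negbTE nonempty) subn_gt0 neq_ltn => ->.
by rewrite /room big1 // => j _; apply/eqP; rewrite -leqn0 leqNgt none.
Qed.

Lemma fill_step_W i cols : i < N -> (a`_i = -1)%R -> fill_inv i cols ->
  fill_inv i.+1 (place_W k cols i.+1).
Proof.
move=> lt_i a_i inv.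
have : 0 < room cols by rewrite -ltz_nat (room_fill inv) prefix_sum_gt0.
case/room_gt0_active=> j0 lt_j0 /(place_W_active i.+1 lt_j0)[j lt_j [act ->]].
move: act; rewrite /is_active lt0n size_eq0 => /andP[nonempty ne_cap].
apply: fill_inv_append => //.
- by move: nonempty; rewrite (empty_fill inv) // -ltnNge => /ltnW.
- by rewrite ltn_neqAle ne_cap (cap_fill inv).
- by rewrite (negbTE nonempty).
Qed.

Lemma fill_step_S i cols : i < N -> (0 < a`_i)%R -> fill_inv i cols ->
  fill_inv i.+1 (place_S cols i.+1).
Proof.
move=> lt_i a_gt0 inv; have [a_i lt_cnt] := pos_entry lt_i a_gt0.
have empty_cnt : nth [::] cols (s_count i) = [::] by apply/eqP; rewrite (empty_fill inv).
rewrite (@place_S_first_empty _ _ (s_count i)) ?(size_fill inv) //; last first.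
  by move=> j' lt_j'; rewrite (empty_fill inv) -?ltnNge //; apply: ltn_trans lt_cnt.
have -> : [:: i.+1] = rcons (nth [::] cols (s_count i)) i.+1 by rewrite empty_cnt.
by apply: (fill_inv_append lt_i inv lt_cnt (leqnn _)); rewrite empty_cnt.
Qed.

Lemma fill_step_inv i cols : i < N -> fill_inv i cols -> fill_inv i.+1 (fill_step k a cols i.+1).
Proof.
move=> lt_i; rewrite /fill_step /letterW /=; case: ifP => [/eqP|a_i]; first exact: fill_step_W.
by apply: fill_step_S; move: (a_pos_or_m1 lt_i); rewrite a_i orbF.
Qed.

Lemma foldl_fill_inv m i cols : i + m <= N -> fill_inv i cols ->
  fill_inv (i + m) (foldl (fill_step k a) cols (iota i.+1 m)).
Proof.
elim: m i cols => [|m IH] i cols le_N inv; first by rewrite addn0.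
rewrite /= -addSnnS; apply: IH; first by rewrite addSnnS.
by apply: fill_step_inv => //; lia.
Qed.

Lemma fill_inv0 : fill_inv 0 (nseq n [::]).
Proof.
have nth0 j : nth [::] (nseq n [::]) j = [::] :> seq nat by rewrite nth_nseq if_same.
split=> [|j _||j _|j _|]; rewrite ?nth0 ?s_count0 ?size_nseq //.
- by rewrite (_ : flatten _ = [::]) //; elim: n => //= m ->.
- by rewrite big_ord0 /room big1 // => j _; rewrite /col_room nth0.
Qed.

Lemma fillTE : 0 < n -> fillT k a = foldl (fill_step k a) (nseq n [::]) (iota 1 N).
Proof.
move=> n_gt0; have N_gt0 : 0 < N by rewrite size_a; lia.
have a0_gt0 : (0 < a`_0)%R.
  have := a_pos_or_m1 N_gt0; case: (0 < _)%R => //= /eqP /(prefix_sum_gt0 N_gt0).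
  by rewrite big_ord0.
rewrite /fillT; case: (size a) N_gt0 => // N' _ /=; congr foldl.
rewrite /fill_step /letterW /= ifN; last by apply: contraTN a0_gt0 => /eqP ->.
by rewrite (@place_S_first_empty _ _ 0) ?size_nseq ?nth_nseq ?if_same.
Qed.

Lemma fillT_inv : 0 < n -> fill_inv N (fillT k a).
Proof. by move=> n_gt0; rewrite fillTE //; apply: (foldl_fill_inv (i := 0)) fill_inv0. Qed.

Lemma fillT_nonempty : 0 < n -> forall j, j < n -> nth [::] (fillT k a) j != [::].
Proof. by move=> n_gt0 j lt_j; rewrite (empty_fill (fillT_inv n_gt0)) // s_count_size -ltnNge. Qed.

(* The path returns to height 0, so no started column has room left. *)
Lemma size_fillT_col : 0 < n ->
  forall j, j < n -> size (nth [::] (fillT k a) j) = (nth 0 k j).+1.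
Proof.
move=> n_gt0 j lt_j; have inv := fillT_inv n_gt0.
have /eqP : room (fillT k a) = 0 by apply/eqP; rewrite -eqz_nat (room_fill inv) sum_a_eq0.
rewrite /room sum_nat_eq0 => /forallP /(_ (Ordinal lt_j)) /=.
rewrite /col_room (negbTE (fillT_nonempty n_gt0 lt_j)) subn_eq0 => le_cap.
by apply/eqP; rewrite eqn_leq le_cap (cap_fill inv).
Qed.

End FillingWord.

Theorem mainTheorem7 (k : seq nat) (a : seq int) :
  1 <= size k ->
  all (fun kj => 0 < kj) k ->
  size a = size k + sumn k ->
  in_Dk k a ->
  size (sigmaD k a) = size k + sumn k.
Proof.
move=> n_gt0 _ size_a a_Dk; have inv := fillT_inv size_a a_Dk n_gt0.
have perm_T := perm_fill inv; have size_T := size_fill inv.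
rewrite /sigmaD size_walking.
- by rewrite (perm_size perm_T) size_iota.
- by rewrite (perm_uniq perm_T) iota_uniq.
- by move=> j; rewrite size_T; apply: size_fillT_col.
- move=> j; rewrite size_T => range; apply: (head_fill inv range).
  by apply: fillT_nonempty; case/andP: range.
- by move=> x; rewrite (perm_mem perm_T) mem_iota => /andP[].
- by rewrite size_T.
Qed.
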